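(* Let $(G,u)$ be a simple dimension group with order unit $u$. Then $\mathbb Q(G,u)=\mathbb Z u$ if and only if there is no $x\in G$ and integer $n$ with $|n|\ge2$ such that $nx=u$.
   Context: A dimension group is an unperforated partially ordered abelian group with the Riesz interpolation property; simple means no nontrivial order ideals. The rational subgroup is $\mathbb Q(G,u)=\{g\in G: pg=mu\text{ for some nonzero } p\in\mathbb Z,\ m\in\mathbb Z\}$. *)

From mathcomp Require Import all_boot all_order all_algebra.
Set Implicit Arguments. Unset Strict Implicit. Unset Printing Implicit Defensive.
Import Order.TTheory GRing.Theory Num.Theory.
Local Open Scope ring_scope.

Definition pogroup (G : zmodType) (le : G -> G -> Prop) : Prop :=
  [/\ (forall x, le x x),
      (forall x y, le x y -> le y x -> x = y),
      (forall x y z, le x y -> le y z -> le x z) &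
      (forall x y z, le x y -> le (x + z) (y + z))].

Definition directed (G : zmodType) (le : G -> G -> Prop) : Prop :=
  forall x : G, exists a b, [/\ le 0 a, le 0 b & x = a - b].

Definition unperforated (G : zmodType) (le : G -> G -> Prop) : Prop :=
  forall (n : nat) (x : G), (0 < n)%N -> le 0 (x *+ n) -> le 0 x.

Definition riesz_interpolation (G : zmodType) (le : G -> G -> Prop) : Prop :=
  forall a1 a2 b1 b2 : G, le a1 b1 -> le a1 b2 -> le a2 b1 -> le a2 b2 ->
    exists c, [/\ le a1 c, le a2 c, le c b1 & le c b2].

Definition dimension_group (G : zmodType) (le : G -> G -> Prop) : Prop :=
  [/\ pogroup le, directed le, unperforated le & riesz_interpolation le].

Definition order_ideal (G : zmodType) (le : G -> G -> Prop) (I : G -> Prop) : Prop :=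
  [/\ I 0,
      (forall x y, I x -> I y -> I (x - y)),
      (forall x y, le 0 x -> le x y -> I y -> I x) &
      (forall x, I x -> exists a b, [/\ I a, I b, le 0 a, le 0 b & x = a - b])].

Definition simple_pog (G : zmodType) (le : G -> G -> Prop) : Prop :=
  (exists x : G, x <> 0) /\
  forall I : G -> Prop, order_ideal le I ->
    (forall x, I x -> x = 0) \/ (forall x, I x).

Definition order_unit (G : zmodType) (le : G -> G -> Prop) (u : G) : Prop :=
  le 0 u /\ forall x : G, exists n : nat, le x (u *+ n).

Definition rational_subgroup (G : zmodType) (u : G) : G -> Prop :=
  fun g => exists p m : int, p != 0 /\ g *~ p = u *~ m.

From mathcomp Require Import all_boot all_order all_algebra.
From mathcomp Require Import zify.
Set Implicit Arguments. Unset Strict Implicit. Unset Printing Implicit Defensive.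
Import Order.TTheory GRing.Theory Num.Theory.
Local Open Scope ring_scope.

(* Only two features of a simple dimension group matter: unperforation makes
   G torsion-free, and u <> 0.  In a torsion-free group, p g = m u with p <> 0
   can be reduced to coprime p, m; the Bezout combination x of g and u then
   satisfies p x = u and g = m x.  So Q(G,u) consists of the multiples of the
   divisors of u, and it is Z u exactly when u has no divisor x with
   n x = u for some |n| >= 2; such an x would be a multiple m u, and
   (m n - 1) u = 0 with m n <> 1 contradicts torsion-freeness. *)

Definition torsion_free (G : zmodType) : Prop :=
  forall (y : G) (k : int), k != 0 -> y *~ k = 0 -> y = 0.

Lemma unperforated_torsion_free (G : zmodType) (le : G -> G -> Prop) :
  pogroup le -> unperforated le -> torsion_free G.
Proof.
move=> [le_refl le_anti _ le_add] unp.
have tf_nat (y : G) (n : nat) : (0 < n)%N -> y *+ n = 0 -> y = 0.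
  move=> n_gt0 yn0.
  have y_ge0 : le 0 y by apply: (unp n) => //; rewrite yn0.
  have Ny_ge0 : le 0 (- y) by apply: (unp n) => //; rewrite mulNrn yn0 oppr0.
  by apply: le_anti => //; have := le_add _ _ y Ny_ge0; rewrite addNr add0r.
move=> y [] n.
  by move=> n0 /(tf_nat y n); apply; rewrite lt0n; apply: contraNneq n0 => ->.
by rewrite NegzE mulrNz => _ /eqP; rewrite oppr_eq0 => /eqP /(tf_nat y n.+1); apply.
Qed.

Lemma order_unit_neq0 (G : zmodType) (le : G -> G -> Prop) (u : G) :
  pogroup le -> (exists y : G, y <> 0) -> order_unit le u -> u <> 0.
Proof.
move=> [_ le_anti _ le_add] [y y_neq0] [_ u_unit] u0; apply: y_neq0.
have le0 (z : G) : le z 0 by have [n] := u_unit z; rewrite u0 mul0rn.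
by apply: le_anti => //; have := le_add _ _ y (le0 (- y)); rewrite addNr add0r.
Qed.

Lemma divisor_in_rational_subgroup (G : zmodType) (u x : G) (n : int) :
  n != 0 -> x *~ n = u -> rational_subgroup u x.
Proof. by move=> n0 xnu; exists n, 1; rewrite mulr1z. Qed.

Section TorsionFree.

Variable G : zmodType.
Hypothesis tfG : torsion_free G.

Lemma mulIrz {k : int} : k != 0 -> injective (fun x : G => x *~ k).
Proof.
move=> k0 x y /eqP; rewrite -subr_eq0 -mulrzBl => /eqP /(tfG k0) /eqP.
by rewrite subr_eq0 => /eqP.
Qed.

Lemma rational_subgroup_divisor (u g : G) : rational_subgroup u g ->
  exists (x : G) (p m : int), [/\ p != 0, x *~ p = u & g = x *~ m].
Proof.
move=> [p [m [p0 gpum]]].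
have [a [b bezout]] := Bezoutz p m.
set d := gcdz p m in bezout.
have d0 : d != 0 by rewrite gcdz_eq0 negb_and p0.
have ep : p = (p %/ d)%Z * d by rewrite divzK // dvdz_gcdl.
have em : m = (m %/ d)%Z * d by rewrite divzK // dvdz_gcdr.
set p' := (p %/ d)%Z in ep *; set m' := (m %/ d)%Z in em *.
have gpum' : g *~ p' = u *~ m'.
  by apply: (mulIrz d0); rewrite -!mulrzA -ep -em.
have bezout' : a * p' + b * m' = 1.
  by apply: (mulIf d0); rewrite mul1r mulrDl -!mulrA -ep -em.
have p'0 : p' != 0 by apply: contra_neq p0 => p'0; rewrite ep p'0 mul0r.
set x := g *~ b + u *~ a.
have xpu : x *~ p' = u.
  rewrite mulrzDl -!mulrzA [b * p']mulrC (mulrzA g) gpum' -mulrzA -mulrzDr.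
  by rewrite addrC [m' * b]mulrC bezout' mulr1z.
exists x, p', m'; split => //.
by apply: (mulIrz p'0); rewrite gpum' -mulrzA mulrC mulrzA xpu.
Qed.

Lemma multiple_proper_divisor_eq0 (u : G) (m n : int) :
  2 <= `|n| -> u *~ m *~ n = u -> u = 0.
Proof.
move=> n_ge2 umnu; apply: (@tfG _ (m * n - 1)).
  by rewrite subr_eq0; apply/eqP => /intUnitRing.unitzPl; lia.
by rewrite mulrzBr mulrzA umnu mulr1z subrr.
Qed.

End TorsionFree.

Theorem mainTheorem17 (G : zmodType) (le : G -> G -> Prop) (u : G) :
  dimension_group le -> simple_pog le -> order_unit le u ->
  ((forall g : G, rational_subgroup u g <-> exists m : int, g = u *~ m) <->
   ~ (exists (x : G) (n : int), 2 <= `|n| /\ x *~ n = u)).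
Proof.
move=> [pog _ unp _] [nontrivial _] ou.
have tfG := unperforated_torsion_free pog unp.
have u_neq0 := order_unit_neq0 pog nontrivial ou.
split.
- move=> QZu [x [n [n_ge2 xnu]]].
  have n0 : n != 0 by apply: contraTneq n_ge2 => ->; rewrite normr0.
  have [m xum] := (QZu x).1 (divisor_in_rational_subgroup n0 xnu).
  by rewrite xum in xnu; exact: u_neq0 (multiple_proper_divisor_eq0 tfG n_ge2 xnu).
- move=> no_div g; split; last by move=> [m ->]; exists 1, m; rewrite mulr1z.
  move=> /(rational_subgroup_divisor tfG) [x [p [m [p0 xpu gxm]]]].
  have [p1|pN1] : p = 1 \/ p = -1.
    have : ~ 2 <= `|p| by move=> p_ge2; apply: no_div; exists x, p.
    by move: p0; lia.
  - by exists m; rewrite gxm -xpu p1 mulr1z.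
  - by exists (- m); rewrite gxm -xpu pN1 mulrN1z mulrNz mulNrz opprK.
Qed.
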